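(* For every positive integer $m$, there is no $(2^{2m},m,p)$-QRA coding with $p>1/2$. That is, there do not exist $p>1/2$, $m$-qubit states $\rho_x$ for $x\in\{0,1\}^{2^{2m}}$, and POVMs $\{E^i_0,E^i_1\}$ on $\mathbb{C}^{2^m}$ for $i\in\{1,\dots,2^{2m}\}$ with $\mathrm{Tr}(E^i_{x_i}\rho_x)\ge p$ for all $x$ and all $i$.
   Context: An $(n,m,p)$-quantum random access (QRA) coding is a map assigning to each $n$-bit string $x\in\{0,1\}^n$ an $m$-qubit state $\rho_x$ (a positive semidefinite trace-one operator on $\mathbb{C}^{2^m}$) such that for every $i\in\{1,\dots,n\}$ there is a POVM $E^i=\{E^i_0,E^i_1\}$ (i.e. $E^i_0,E^i_1$ are positive semidefinite Hermitian operators on $\mathbb{C}^{2^m}$ with $E^i_0+E^i_1=I$) satisfying $\mathrm{Tr}(E^i_{x_i}\rho_x)\ge p$ for all $x\in\{0,1\}^n$, where $x_i$ is the $i$-th bit of $x$. *)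

From Stdlib Require Import Reals.
From HB Require Import structures.
From mathcomp Require Import all_boot all_order all_algebra.
From mathcomp Require Import complex Rstruct.
Set Implicit Arguments. Unset Strict Implicit. Unset Printing Implicit Defensive.
Import Order.TTheory GRing.Theory Num.Theory ComplexField.
Local Open Scope ring_scope.

Definition Cplx : numClosedFieldType := (Rdefinitions.R)[i].

Definition adjmx (n k : nat) (A : 'M[Cplx]_(n, k)) : 'M[Cplx]_(k, n) :=
  \matrix_(i, j) (A j i)^*.

Definition hermitian_mx (n : nat) (A : 'M[Cplx]_n) : Prop := adjmx A = A.

Definition psd_mx (n : nat) (A : 'M[Cplx]_n) : Prop :=
  hermitian_mx A /\ forall v : 'cV[Cplx]_n, 0 <= (adjmx v *m A *m v) 0 0.

Definition density_mx (n : nat) (rho : 'M[Cplx]_n) : Prop :=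
  psd_mx rho /\ \tr rho = 1.

Definition povm2 (n : nat) (E : bool -> 'M[Cplx]_n) : Prop :=
  psd_mx (E false) /\ psd_mx (E true) /\ E false + E true = 1%:M.

(* An (n, m, p)-QRA coding. Bit strings x in {0,1}^n are finite functions
   'I_n -> bool (false = 0, true = 1); indices i in {1..n} are 'I_n. *)
Definition QRA_coding (n m : nat) (p : Rdefinitions.R) : Prop :=
  exists (rho : {ffun 'I_n -> bool} -> 'M[Cplx]_(2 ^ m))
         (E : 'I_n -> bool -> 'M[Cplx]_(2 ^ m)),
    (forall x, density_mx (rho x)) /\
    (forall i, povm2 (E i)) /\
    (forall (x : {ffun 'I_n -> bool}) (i : 'I_n),
        ((p%:C)%C : Cplx) <= \tr (E i (x i) *m rho x)).

From Stdlib Require Import Reals.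
From HB Require Import structures.
From mathcomp Require Import all_boot all_order all_algebra.
From mathcomp Require Import complex Rstruct.
From mathcomp Require Import lra.
Set Implicit Arguments. Unset Strict Implicit. Unset Printing Implicit Defensive.
Import Order.TTheory GRing.Theory Num.Theory.
Local Open Scope ring_scope.

(* With N = 2^m, the n + 1 matrices E_i(0) and I lie in the N^2-dimensional
   space of N x N matrices, so for n >= N^2 they satisfy a nontrivial linear
   relation. Tracing it against rho_x yields an affine relation
   sum_i c_i f_x(i) = d between the probabilities f_x(i) = Tr(E_i(0) rho_x),
   valid for every x. Since p > 1/2, f_x(i) > f_y(i) whenever x_i = 0 and
   y_i = 1; choosing x and y bitwise by the sign of a_i = Re(c_i c_j^* ) for a
   fixed c_j <> 0 makes sum_i a_i (f_x(i) - f_y(i)) strictly positive, while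
   the relation forces it to vanish. *)

Lemma mx_family_dependent (F : fieldType) (k r s : nat) (A : 'I_k -> 'M[F]_(r, s)) :
  (r * s < k)%N -> exists c : 'I_k -> F, (exists i, c i != 0) /\ \sum_i c i *: A i = 0.
Proof.
move=> lt_rs_k; pose M := \matrix_(i < k) mxvec (A i).
have /rowV0Pn[u /sub_kermxP uM0 /rV0Pn u_neq0] : kermx M != 0.
  rewrite -mxrank_eq0 mxrank_ker subn_eq0 -ltnNge.
  exact: leq_ltn_trans (rank_leq_col M) lt_rs_k.
exists (fun i => u 0 i); split=> //.
apply: (can_inj mxvecK); rewrite linear0 -uM0 mulmx_sum_row linear_sum.
by apply: eq_bigr => i _; rewrite linearZ rowK.
Qed.

Lemma bit_separated_relation_eq0 (C : numClosedFieldType) (n : nat)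
    (f : {ffun 'I_n -> bool} -> 'I_n -> C) (c : 'I_n -> C) (d : C) :
    (forall (x y : {ffun 'I_n -> bool}) i, x i = false -> y i = true -> f y i < f x i) ->
    (forall x, \sum_i c i * f x i = d) ->
  forall i, c i = 0.
Proof.
move=> f_sep f_rel j; apply/eqP; apply: contraT => cj_neq0.
pose a i := 'Re (c i * (c j)^*).
pose xm := [ffun i => 0 <= a i]; pose xp := [ffun i => ~~ xm i].
pose D i := f xp i - f xm i.
have D_gt0 i : 0 <= a i -> 0 < D i.
  by move=> a_ge0; rewrite subr_gt0 f_sep // !ffunE a_ge0.
have D_lt0 i : a i < 0 -> D i < 0.
  by move=> a_lt0; rewrite subr_lt0 f_sep // !ffunE ?negbK lt_geF //.
have a_real i : a i \is Num.real by apply: Creal_Re.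
have aD_ge0 i : 0 <= a i * D i.
  have [a_ge0 | a_lt0] := real_leP (real0 _) (a_real i).
    by rewrite mulr_ge0 // ltW // D_gt0.
  by rewrite mulr_le0 // ltW // D_lt0.
have D_real i : D i \is Num.real.
  have [a_ge0 | a_lt0] := real_leP (real0 _) (a_real i).
    exact/gtr0_real/D_gt0.
  exact/ltr0_real/D_lt0.
have aj_gt0 : 0 < a j.
  rewrite /a -normCK; have /Creal_ReP -> : `|c j| ^+ 2 \is Num.real.
    by rewrite rpredX // normr_real.
  by rewrite exprn_gt0 // normr_gt0.
have cD0 : \sum_i c i * D i = 0.
  by rewrite (eq_bigr _ (fun i _ => mulrBr _ _ _)) sumrB !f_rel subrr.
have aD_sum0 : \sum_i a i * D i = 0.
  have := congr1 (fun z => 'Re (z * (c j)^*)) cD0.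
  rewrite mulr_suml raddf_sum /= mul0r raddf0 => Re_sum0; rewrite -[RHS]Re_sum0.
  by apply: eq_bigr => i _; rewrite mulrAC ReMr.
suff : 0 < \sum_i a i * D i by rewrite aD_sum0 ltxx.
by rewrite (bigD1 j) //= ltr_wpDr ?sumr_ge0 // mulr_gt0 // D_gt0 // ltW.
Qed.

Lemma no_QRA_coding (n m : nat) (p : Rdefinitions.R) :
  (2 ^ m * 2 ^ m <= n)%N -> 1 / 2 < p -> ~ QRA_coding n m p.
Proof.
move=> dim_le half_lt_p [rho [E [rho_dens [E_povm succ]]]].
pose P : Cplx := (p%:C)%C.
pose f x i := \tr (E i false *m rho x).
have P_sep : 1 - P < P.
  have : (((1 - p)%:C)%C : Cplx) < (p%:C)%C by rewrite ltcR; lra.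
  by rewrite rmorphB.
have f_sep (x y : {ffun 'I_n -> bool}) i : x i = false -> y i = true -> f y i < f x i.
  move=> xi yi; have := succ x i; have := succ y i; rewrite xi yi => Py Px.
  apply: lt_le_trans Px; apply: le_lt_trans P_sep.
  have tr_E_true : \tr (E i true *m rho y) = 1 - f y i.
    case: (E_povm i) => _ [_ E_sum]; case: (rho_dens y) => _ tr_rho.
    have -> : E i true = 1%:M - E i false by rewrite -E_sum addrC addKr.
    by rewrite mulmxBl mul1mx raddfB /= tr_rho.
  by move: Py; rewrite tr_E_true lerBrDr addrC -lerBrDr.
pose A (i : 'I_n.+1) := if unlift ord0 i is Some j then E j false else 1%:M.
have [c [[k ck] c_rel]] : exists c : 'I_n.+1 -> Cplx,
    (exists i, c i != 0) /\ \sum_i c i *: A i = 0.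
  by apply: mx_family_dependent; rewrite ltnS.
have f_rel x : \sum_j c (lift ord0 j) * f x j = - c ord0.
  have := congr1 (fun B => \tr (B *m rho x)) c_rel.
  rewrite /= mul0mx mxtrace0 mulmx_suml raddf_sum big_ord_recl /= /A unlift_none.
  case: (rho_dens x) => _ tr_rho.
  rewrite -scalemxAl mul1mx mxtraceZ tr_rho mulr1 addrC => /eqP.
  rewrite addr_eq0 => /eqP <-; apply: eq_bigr => j _.
  by rewrite liftK -scalemxAl mxtraceZ.
have c_lift0 := bit_separated_relation_eq0 f_sep f_rel.
have c00 : c ord0 = 0.
  apply/eqP; rewrite -oppr_eq0 -(f_rel [ffun=> false]).
  by rewrite big1 // => j _; rewrite c_lift0 mul0r.
by case: (unliftP ord0 k) ck => [j ->| ->]; rewrite ?c_lift0 ?c00 eqxx.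
Qed.

Theorem theorem2 (m : nat) (hm : (0 < m)%N) (p : Rdefinitions.R)
  (hp : 1 / 2 < p) : ~ QRA_coding (2 ^ (2 * m))%N m p.
Proof. by apply: no_QRA_coding; rewrite // mul2n -addnn expnD. Qed.
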